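(* Let $V$ be a finite set, let $\mathbb{F}$ be a field, let $A$ be a $V\times V$-matrix over $\mathbb{F}$, and let $Z\subseteq V$ be such that $A[Z,Z]$ is nonsingular. Then $p(A) = p(A*Z)$, where for a $V\times V$-matrix $B$ the nullity polynomial is $p(B) = \sum_{X,Y\subseteq V} y^{\,n(B[X,Y])}$ (a polynomial in the indeterminate $y$).
   Context: A $V\times V$-matrix over $\mathbb{F}$ is a function $V\times V\to\mathbb{F}$. For $X,Y\subseteq V$, $B[X,Y]$ denotes the restriction of $B$ to $X\times Y$, viewed as a linear map $\mathbb{F}^Y\to\mathbb{F}^X$, and $n(\cdot)$ denotes its nullity (dimension of its null space in $\mathbb{F}^Y$); the sum ranges over all pairs of subsets, including empty ones. For $Z\subseteq V$ with $A[Z,Z]$ nonsingular, the principal pivot transform $A*Z$ is the $V\times V$-matrix given blockwise (with $\bar Z=V\setminus Z$) by $(A*Z)[Z,Z]=A[Z,Z]^{-1}$, $(A*Z)[Z,\bar Z]=-A[Z,Z]^{-1}A[Z,\bar Z]$, $(A*Z)[\bar Z,Z]=A[\bar Z,Z]A[Z,Z]^{-1}$, $(A*Z)[\bar Z,\bar Z]=A[\bar Z,\bar Z]-A[\bar Z,Z]A[Z,Z]^{-1}A[Z,\bar Z]$. *)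

From mathcomp Require Import all_boot all_order all_algebra.
Set Implicit Arguments. Unset Strict Implicit. Unset Printing Implicit Defensive.
Import GRing.Theory.
Local Open Scope ring_scope.

Definition vmatrix (V : finType) (F : Type) := V -> V -> F.

Definition subvmx (V : finType) (F : Type) (B : vmatrix V F) (X Y : {set V})
  : 'M[F]_(#|X|, #|Y|) :=
  \matrix_(i < #|X|, j < #|Y|) B (enum_val i) (enum_val j).

(* Nullity of B[X,Y] viewed as a linear map F^Y -> F^X (acting on column
   vectors v with B[X,Y] v = 0): dimension of the (row) kernel of the transpose. *)
Definition nullity (V : finType) (F : fieldType) (B : vmatrix V F) (X Y : {set V})
  : nat := \rank (kermx (subvmx B X Y)^T).

Definition nullity_poly (V : finType) (F : fieldType) (B : vmatrix V F) : {poly int} :=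
  \sum_(X : {set V}) \sum_(Y : {set V}) 'X^(nullity B X Y).

Definition entry (V : finType) (F : fieldType) (X Y : {set V})
  (M : 'M[F]_(#|X|, #|Y|)) (x y : V) : F :=
  match [pick i : 'I_#|X| | enum_val i == x], [pick j : 'I_#|Y| | enum_val j == y] with
  | Some i, Some j => M i j
  | _, _ => 0
  end.

(* Principal pivot transform A * Z (meaningful when A[Z,Z] is nonsingular). *)
Definition ppt (V : finType) (F : fieldType) (A : vmatrix V F) (Z : {set V})
  : vmatrix V F :=
  let Zinv := entry (invmx (subvmx A Z Z)) in
  fun x y =>
    if x \in Z then
      if y \in Z then Zinv x y
      else - \sum_(z in Z) Zinv x z * A z y
    else
      if y \in Z then \sum_(z in Z) A x z * Zinv z y
      else A x y - \sum_(z in Z) \sum_(w in Z) A x z * Zinv z w * A w y.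

(* Write e_v for the unit row vectors of F^V.  The nullity n(B[X,Y]) is the
   corank of the matrix whose rows are the e_v with v outside Y and the rows of
   B indexed by X, since a column vector is killed by that matrix iff it is
   supported on Y and killed by B[X,Y].  Let T be the matrix whose row v is row
   v of A*Z if v is in Z and e_v otherwise.  A block computation shows that row
   v of A T is e_v for v in Z and row v of A*Z otherwise.  Hence T is invertible
   (the matrix with rows A_v for v in Z and e_v otherwise is a left inverse),
   and right multiplication by T maps the rows describing A[X',Y'] onto those
   describing (A*Z)[X,Y], where X' = (X \ Z) u (Z \ Y) and Y' = (Y \ Z) u (Z \ X).
   So n(A[X',Y']) = n((A*Z)[X,Y]), and (X,Y) |-> (X',Y') is an involution. *)

From mathcomp Require Import all_boot all_order all_algebra.
Set Implicit Arguments. Unset Strict Implicit. Unset Printing Implicit Defensive.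
Import GRing.Theory.
Local Open Scope ring_scope.

Section SelectionMatrices.

Variables (V : finType) (F : fieldType).
Implicit Types (S X Y : {set V}) (B : vmatrix V F).

Definition vmx B : 'M[F]_#|V| := \matrix_(i, j) B (enum_val i) (enum_val j).

Definition selmx S : 'M[F]_(#|S|, #|V|) :=
  \matrix_(i, j) (j == enum_rank (enum_val i))%:R.

Lemma mul_selmxE S k (M : 'M[F]_(#|V|, k)) i j :
  (selmx S *m M) i j = M (enum_rank (enum_val i)) j.
Proof.
rewrite !mxE (bigD1 (enum_rank (enum_val i))) //= big1 ?addr0.
  by rewrite mxE eqxx mul1r.
by move=> l /negbTE Hl; rewrite mxE Hl mul0r.
Qed.

Lemma row_mul_selmx S k (M : 'M[F]_(#|V|, k)) i :
  row i (selmx S *m M) = row (enum_rank (enum_val i)) M.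
Proof. by apply/rowP => j; rewrite mxE [RHS]mxE mul_selmxE. Qed.

Lemma selmx_mul_tr S : selmx S *m (selmx S)^T = 1%:M.
Proof.
apply/matrixP => i j; rewrite mul_selmxE !mxE.
by rewrite (inj_eq enum_rank_inj) (inj_eq enum_val_inj).
Qed.

Lemma selmx_mul_trC S : selmx S *m (selmx (~: S))^T = 0.
Proof.
apply/matrixP => i j; rewrite mul_selmxE !mxE.
case: eqP => // /enum_rank_inj Eji.
by have := enum_valP j; rewrite -Eji inE enum_valP.
Qed.

Lemma selmx_free S : row_free (selmx S).
Proof. by apply/row_freeP; exists (selmx S)^T; apply: selmx_mul_tr. Qed.

Lemma tr_selmx_mulE S k l :
  ((selmx S)^T *m selmx S) k l = ((k == l) && (enum_val k \in S))%:R.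
Proof.
rewrite !mxE; have [kS | kNS] := boolP (enum_val k \in S).
  rewrite (bigD1 (enum_rank_in kS (enum_val k))) //= big1.
    by rewrite !mxE enum_rankK_in // enum_valK addr0 eqxx mul1r andbT eq_sym.
  move=> i ik; rewrite !mxE; case: eqP => [Eik|]; last by rewrite mul0r.
  case/eqP: ik; apply: enum_val_inj.
  by rewrite enum_rankK_in // Eik enum_rankK.
rewrite andbF big1 // => i _; rewrite !mxE.
case: eqP => [Eik|]; last by rewrite mul0r.
by move: kNS; rewrite Eik enum_rankK enum_valP.
Qed.

Lemma tr_selmx_mul_sum S :
  (selmx S)^T *m selmx S + (selmx (~: S))^T *m selmx (~: S) = 1%:M.
Proof.
apply/matrixP => k l; rewrite [LHS]mxE !tr_selmx_mulE !mxE inE.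
by case: (k == l); case: (enum_val k \in S); rewrite ?addr0 ?add0r.
Qed.

Lemma subvmx_selmx B X Y : subvmx B X Y = selmx X *m vmx B *m (selmx Y)^T.
Proof.
apply/matrixP => i j; rewrite !mxE.
rewrite (bigD1 (enum_rank (enum_val j))) //= big1 ?addr0.
  by rewrite mul_selmxE !mxE !enum_rankK eqxx mulr1.
by move=> l /negbTE Hl; rewrite !mxE Hl mulr0.
Qed.

Definition augmx B X Y := col_mx (selmx (~: Y)) (selmx X *m vmx B).

Lemma nullity_augmx B X Y : nullity B X Y = (#|V| - \rank (augmx B X Y))%N.
Proof.
set M := subvmx B X Y; set C := augmx B X Y.
have trM : M^T = selmx Y *m (selmx X *m vmx B)^T.
  by rewrite /M subvmx_selmx !trmx_mul trmxK mulmxA.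
have trC : C^T = row_mx (selmx (~: Y))^T (selmx X *m vmx B)^T.
  by rewrite tr_col_mx.
have [kerC_out kerC_B] : kermx C^T *m (selmx (~: Y))^T = 0 /\
                         kermx C^T *m (selmx X *m vmx B)^T = 0.
  have /eqP := mulmx_ker C^T; rewrite {2}trC mul_mx_row row_mx_eq0.
  by case/andP=> /eqP-> /eqP->.
have kerC_on_Y : kermx C^T = kermx C^T *m (selmx Y)^T *m selmx Y.
  rewrite -mulmxA -[LHS]mulmx1 -(tr_selmx_mul_sum Y) mulmxDr !mulmxA.
  by rewrite kerC_out mul0mx addr0.
have kerC_eq : (kermx C^T :=: kermx M^T *m selmx Y)%MS.
  apply/eqmxP/andP; split.
    rewrite {1}kerC_on_Y submxMr //; apply/sub_kermxP.
    by rewrite trM !mulmxA -kerC_on_Y kerC_B.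
  apply/sub_kermxP; rewrite trC mul_mx_row -mulmxA selmx_mul_trC mulmx0.
  by rewrite -mulmxA -trM mulmx_ker row_mx0.
rewrite /nullity -/M -(mxrankMfree _ (selmx_free Y)) -kerC_eq.
by rewrite mxrank_ker mxrank_tr.
Qed.

Lemma augmx_mul_sub B X Y p q (N : 'M[F]_(#|V|, p)) (M : 'M[F]_(q, p)) :
  (forall v, v \notin Y -> (row (enum_rank v) N <= M)%MS) ->
  (forall v, v \in X -> (row (enum_rank v) (vmx B *m N) <= M)%MS) ->
  (augmx B X Y *m N <= M)%MS.
Proof.
move=> outY_sub inX_sub; rewrite mul_col_mx col_mx_sub -mulmxA.
apply/andP; split; apply/row_subP => i; rewrite row_mul_selmx.
  by apply: outY_sub; rewrite -in_setC enum_valP.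
exact/inX_sub/enum_valP.
Qed.

Lemma row_sub_augmx_mul B X Y p (N : 'M[F]_(#|V|, p)) v :
  v \notin Y -> (row (enum_rank v) N <= augmx B X Y *m N)%MS.
Proof.
rewrite -in_setC => vY; rewrite -(enum_rankK_in vY vY) -row_mul_selmx.
by rewrite mul_col_mx (submx_trans (row_sub _ _)) // -addsmxE addsmxSl.
Qed.

Lemma vmx_row_sub_augmx_mul B X Y p (N : 'M[F]_(#|V|, p)) v :
  v \in X -> (row (enum_rank v) (vmx B *m N) <= augmx B X Y *m N)%MS.
Proof.
move=> vX; rewrite -(enum_rankK_in vX vX) -row_mul_selmx mulmxA.
by rewrite mul_col_mx (submx_trans (row_sub _ _)) // -addsmxE addsmxSr.
Qed.

Lemma row1_sub_augmx B X Y v :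
  v \notin Y -> (row (enum_rank v) 1%:M <= augmx B X Y)%MS.
Proof. by move=> vY; have := row_sub_augmx_mul B X 1%:M vY; rewrite mulmx1. Qed.

Lemma row_vmx_sub_augmx B X Y v :
  v \in X -> (row (enum_rank v) (vmx B) <= augmx B X Y)%MS.
Proof.
by move=> vX; have := @vmx_row_sub_augmx_mul B X Y _ 1%:M v vX; rewrite !mulmx1.
Qed.

Definition merge_rows (Z : {set V}) p (M N : 'M[F]_(#|V|, p)) : 'M[F]_(#|V|, p) :=
  \matrix_(i, j) if enum_val i \in Z then M i j else N i j.

Lemma row_merge_rows (Z : {set V}) p (M N : 'M[F]_(#|V|, p)) v :
  row (enum_rank v) (merge_rows Z M N) =
  if v \in Z then row (enum_rank v) M else row (enum_rank v) N.
Proof.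
by apply/rowP => j; rewrite !mxE enum_rankK; case: (v \in Z); rewrite mxE.
Qed.

Lemma sum_enum_val (f : V -> F) : \sum_(k < #|V|) f (enum_val k) = \sum_x f x.
Proof.
rewrite [RHS](reindex (fun k : 'I_#|V| => enum_val k)) //.
by exists enum_rank => x _; rewrite ?enum_valK ?enum_rankK.
Qed.

Lemma sum_mul_if_in (Z : {set V}) (g h : V -> F) w :
  \sum_x g x * (if x \in Z then h x else (x == w)%:R) =
  \sum_(x in Z) g x * h x + (if w \in Z then 0 else g w).
Proof.
rewrite (bigID (mem Z)) /=; congr (_ + _); first by apply: eq_bigr => x ->.
case: ifP => wZ.
  apply: big1 => x xNZ; rewrite (negbTE xNZ); case: eqP => [Exw|]; last by rewrite mulr0.
  by move: xNZ; rewrite Exw wZ.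
rewrite (bigD1 w) ?wZ //= eqxx mulr1 big1 ?addr0 // => x /andP[xNZ xw].
by rewrite (negbTE xNZ) (negbTE xw) mulr0.
Qed.

End SelectionMatrices.

Lemma entry_enum_val (V : finType) (F : fieldType) (X Y : {set V})
    (M : 'M[F]_(#|X|, #|Y|)) i j :
  entry M (enum_val i) (enum_val j) = M i j.
Proof.
rewrite /entry; case: pickP => [i' /eqP/enum_val_inj ->|/(_ i)]; last by rewrite eqxx.
by case: pickP => [j' /eqP/enum_val_inj ->|/(_ j)]; last by rewrite eqxx.
Qed.

Definition pivot_set (V : finType) (Z X Y : {set V}) := (X :\: Z) :|: (Z :\: Y).

Lemma in_pivot_set (V : finType) (Z X Y : {set V}) v :
  (v \in pivot_set Z X Y) = if v \in Z then v \notin Y else v \in X.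
Proof. by rewrite !inE; case: (v \in Z); rewrite ?andbT ?andbF ?orbF. Qed.

Lemma pivot_setK (V : finType) (Z X Y : {set V}) :
  pivot_set Z (pivot_set Z X Y) (pivot_set Z Y X) = X.
Proof.
by apply/setP => v; rewrite !in_pivot_set; case: (v \in Z); rewrite ?negbK.
Qed.

Section PivotTransform.

Variables (V : finType) (F : fieldType) (A : vmatrix V F) (Z : {set V}).
Hypothesis A_ZZ_unit : subvmx A Z Z \in unitmx.

Let Ainv := entry (invmx (subvmx A Z Z)).

Lemma sum_mul_entry_invmx v w : v \in Z -> w \in Z ->
  \sum_(x in Z) A v x * Ainv x w = (v == w)%:R.
Proof.
move=> vZ wZ; rewrite -(enum_rankK_in vZ vZ) -(enum_rankK_in wZ wZ).
set a := enum_rank_in vZ v; set b := enum_rank_in wZ w.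
rewrite big_enum_val (inj_eq enum_val_inj).
have := congr1 (fun M : 'M[F]_#|Z| => M a b) (mulmxV A_ZZ_unit); rewrite !mxE => <-.
by apply: eq_bigr => i _; rewrite /Ainv entry_enum_val mxE.
Qed.

Lemma sum_mul_ppt_out v w : v \in Z -> w \notin Z ->
  \sum_(x in Z) A v x * ppt A Z x w = - A v w.
Proof.
move=> vZ /negbTE wNZ.
transitivity (- \sum_(x in Z) \sum_(z in Z) A v x * Ainv x z * A z w).
  rewrite -sumrN; apply: eq_bigr => x xZ.
  rewrite /ppt xZ wNZ mulrN mulr_sumr; congr (- _).
  by apply: eq_bigr => z _; rewrite mulrA.
rewrite exchange_big /=.
under eq_bigr do rewrite -mulr_suml.
congr (- _); rewrite (bigD1 v) //= sum_mul_entry_invmx // eqxx mul1r.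
rewrite big1 ?addr0 // => z /andP[zZ zv].
by rewrite sum_mul_entry_invmx // eq_sym (negbTE zv) mul0r.
Qed.

Let T := merge_rows Z (vmx (ppt A Z)) 1%:M.

Lemma vmx_mul_pivot : vmx A *m T = merge_rows Z 1%:M (vmx (ppt A Z)).
Proof.
apply/matrixP => i j; rewrite !mxE; set v := enum_val i; set w := enum_val j.
pose f x := A v x * (if x \in Z then ppt A Z x w else (x == w)%:R).
rewrite (eq_bigr (fun k => f (enum_val k))); last first.
  by move=> k _; rewrite /f !mxE -(inj_eq enum_val_inj).
rewrite sum_enum_val sum_mul_if_in.
rewrite -(inj_eq enum_val_inj) -/v -/w.
have [vZ|vNZ] := boolP (v \in Z); have [wZ|wNZ] := boolP (w \in Z).
- rewrite addr0 -sum_mul_entry_invmx //; apply: eq_bigr => x xZ.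
  by rewrite /ppt xZ wZ.
- rewrite sum_mul_ppt_out // addNr; case: eqP => // Evw.
  by move: wNZ; rewrite -Evw vZ.
- rewrite addr0 {2}/ppt (negbTE vNZ) wZ; apply: eq_bigr => x xZ.
  by rewrite /ppt xZ wZ.
rewrite {2}/ppt (negbTE vNZ) (negbTE wNZ) addrC; congr (_ + _).
rewrite -sumrN; apply: eq_bigr => x xZ; rewrite /ppt xZ (negbTE wNZ) mulrN mulr_sumr.
by congr (- _); apply: eq_bigr => z _; rewrite mulrA.
Qed.

Lemma row_vmx_mul_pivot v :
  row (enum_rank v) (vmx A *m T) =
  if v \in Z then row (enum_rank v) 1%:M else row (enum_rank v) (vmx (ppt A Z)).
Proof. by rewrite vmx_mul_pivot row_merge_rows. Qed.

Lemma pivot_unit : T \in unitmx.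
Proof.
suff: merge_rows Z (vmx A) 1%:M *m T = 1%:M by case/mulmx1_unit.
apply/row_matrixP => i; rewrite -(enum_valK i) !row_mul row_merge_rows.
case: ifP => vZ; first by rewrite -row_mul row_vmx_mul_pivot vZ.
by rewrite -row_mul mul1mx row_merge_rows vZ.
Qed.

Lemma rank_augmx_ppt X Y :
  \rank (augmx A (pivot_set Z X Y) (pivot_set Z Y X)) = \rank (augmx (ppt A Z) X Y).
Proof.
have T_free : row_free T by rewrite row_free_unit pivot_unit.
rewrite -(mxrankMfree _ T_free); apply/eqmx_rank/andP; split.
  apply: augmx_mul_sub => v; rewrite in_pivot_set.
  - rewrite row_merge_rows; case: ifP => vZ; rewrite ?negbK => vS.
      exact: row_vmx_sub_augmx.
    exact: row1_sub_augmx.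
  - rewrite row_vmx_mul_pivot; case: ifP => vZ vS.
      exact: row1_sub_augmx.
    exact: row_vmx_sub_augmx.
rewrite -[augmx (ppt A Z) X Y]mulmx1; apply: augmx_mul_sub => v vS.
  have [vZ|vNZ] := boolP (v \in Z).
    have -> : row (enum_rank v) 1%:M = row (enum_rank v) (vmx A *m T).
      by rewrite row_vmx_mul_pivot vZ.
    by rewrite vmx_row_sub_augmx_mul // in_pivot_set vZ.
  have -> : row (enum_rank v) 1%:M = row (enum_rank v) T.
    by rewrite row_merge_rows (negbTE vNZ).
  by rewrite row_sub_augmx_mul // in_pivot_set (negbTE vNZ).
rewrite mulmx1; have [vZ|vNZ] := boolP (v \in Z).
  have -> : row (enum_rank v) (vmx (ppt A Z)) = row (enum_rank v) T.
    by rewrite row_merge_rows vZ.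
  by rewrite row_sub_augmx_mul // in_pivot_set vZ negbK.
have -> : row (enum_rank v) (vmx (ppt A Z)) = row (enum_rank v) (vmx A *m T).
  by rewrite row_vmx_mul_pivot (negbTE vNZ).
by rewrite vmx_row_sub_augmx_mul // in_pivot_set (negbTE vNZ).
Qed.

End PivotTransform.

Theorem corollary2 (V : finType) (F : fieldType) (A : vmatrix V F) (Z : {set V}) :
  subvmx A Z Z \in unitmx ->
  nullity_poly A = nullity_poly (ppt A Z).
Proof.
move=> A_ZZ_unit.
pose pivot (p : {set V} * {set V}) := (pivot_set Z p.1 p.2, pivot_set Z p.2 p.1).
have pivotK : involutive pivot by move=> [X Y]; rewrite /pivot /= !pivot_setK.
rewrite /nullity_poly !pair_bigA [RHS](reindex_inj (inv_inj pivotK)).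
apply: eq_bigr => [[X Y]] _ /=.
by rewrite !nullity_augmx -rank_augmx_ppt // !pivot_setK.
Qed.
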